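(* Let $\mathcal{T}=\mathcal{X}=\mathcal{Y}=\{0,1\}$ and $P\in\Delta_{\mathcal{T},\mathcal{X},\mathcal{Y}}$ with $P(T=0)>0$, $P(T=1)>0$. Set $b=P(X=0\mid T=0)$, $c=P(X=0\mid T=1)$, $d=P(Y=0\mid T=0)$, $e=P(Y=0\mid T=1)$. Then $\arg\max_{Q\in\Delta_P}H_Q(T\mid X,Y)$ consists of a single point unless $b=c$ and $d=e$.
   Context: $\Delta_{\mathcal{T},\mathcal{X},\mathcal{Y}}$ is the set of all joint distributions of $(T,X,Y)$. For $P$, $\Delta_P=\{Q\in\Delta_{\mathcal{T},\mathcal{X},\mathcal{Y}}: Q(X=x,T=t)=P(X=x,T=t),\ Q(Y=y,T=t)=P(Y=y,T=t)\ \forall x,y,t\}$. $H_Q(T\mid X,Y)$ is the conditional entropy under $Q$. *)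

From Stdlib Require Import Reals.
Open Scope R_scope.

(* Alphabets T = X = Y = {0,1} are encoded by bool, with false = 0, true = 1.
   A joint distribution of (T,X,Y) is a function Q t x y = Q(T=t,X=x,Y=y). *)
Definition jdist := bool -> bool -> bool -> R.

Definition sumb (f : bool -> R) : R := f false + f true.

Definition is_dist (Q : jdist) : Prop :=
  (forall t x y, 0 <= Q t x y) /\
  sumb (fun t => sumb (fun x => sumb (fun y => Q t x y))) = 1.

Definition margT (Q : jdist) (t : bool) : R :=
  sumb (fun x => sumb (fun y => Q t x y)).
Definition margTX (Q : jdist) (t x : bool) : R := sumb (fun y => Q t x y).
Definition margTY (Q : jdist) (t y : bool) : R := sumb (fun x => Q t x y).
Definition margXY (Q : jdist) (x y : bool) : R := sumb (fun t => Q t x y).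

Definition DeltaP (P Q : jdist) : Prop :=
  is_dist Q /\
  (forall t x, margTX Q t x = margTX P t x) /\
  (forall t y, margTY Q t y = margTY P t y).

Definition entTerm (q m : R) : R :=
  if Rlt_dec 0 q then q * (ln (m / q) / ln 2) else 0.

(* conditional entropy H_Q(T | X, Y) = - sum Q(t,x,y) log2 (Q(t,x,y)/Q(x,y)) *)
Definition condEntT_XY (Q : jdist) : R :=
  sumb (fun t => sumb (fun x => sumb (fun y =>
    entTerm (Q t x y) (margXY Q x y)))).

Definition is_argmax (P Q : jdist) : Prop :=
  DeltaP P Q /\ (forall Q', DeltaP P Q' -> condEntT_XY Q' <= condEntT_XY Q).

(* Every Q in Delta_P is determined by the two numbers s_t = Q(t,0,0), which range over a
   rectangle, and H_Q(T|X,Y) depends continuously on them, so a maximiser exists.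
   H_Q(T|X,Y) is a sum over the cells (x,y) of the functions
   (u,v) |-> u log((u+v)/u) + v log((u+v)/v), which by the log-sum inequality are concave
   and strictly concave except along rays.  The midpoint of two maximisers Q1, Q2 lies in
   Delta_P, so every cell of Q1 is proportional to the same cell of Q2.  As Q1 - Q2 is
   (d0, d1) times the checkerboard pattern, every (Q1(0,x,y), Q1(1,x,y)) is then
   proportional to (d0, d1); summing over cells, the conditional laws of X and of Y given
   T = 0 and T = 1 agree, unless d = 0, i.e. Q1 = Q2. *)

From Stdlib Require Import Reals Lra FunctionalExtensionality.
Open Scope R_scope.

Lemma ln_le_sub1 y : 0 < y -> ln y <= y - 1.
Proof. intros Hy. pose proof (exp_ineq1_le (ln y)). rewrite exp_ln in H; lra. Qed.

Lemma ln_lt_sub1 y : 0 < y -> y <> 1 -> ln y < y - 1.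
Proof.
  intros Hy H1. pose proof (exp_ineq1 (ln y) (ln_neq_0 y H1 Hy)).
  rewrite exp_ln in H; lra.
Qed.

Lemma ln_div x y : 0 < x -> 0 < y -> ln (x / y) = ln x - ln y.
Proof. intros Hx Hy. unfold Rdiv. rewrite ln_mult, ln_Rinv; auto with real. Qed.

Lemma ln2_pos : 0 < ln 2.
Proof. pose proof ln_lt_2; lra. Qed.

Definition ent_ln (a b : R) : R := if Rlt_dec 0 a then a * ln (b / a) else 0.

Lemma entTerm_ent_ln q m : entTerm q m = ent_ln q m / ln 2.
Proof.
  pose proof ln2_pos. unfold entTerm, ent_ln.
  destruct (Rlt_dec 0 q); field; lra.
Qed.

Lemma ent_ln_half a b : ent_ln (a / 2) (b / 2) = ent_ln a b / 2.
Proof.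
  unfold ent_ln. destruct (Rlt_dec 0 (a / 2)), (Rlt_dec 0 a); try lra.
  replace (b / 2 / (a / 2)) with (b / a) by (field; lra). field.
Qed.

Lemma ent_ln_split a b r : 0 < a -> 0 < b -> 0 < r ->
  ent_ln a b = a * ln r + a * ln (b / (a * r)).
Proof.
  intros Ha Hb Hr. unfold ent_ln. destruct (Rlt_dec 0 a); [|lra].
  rewrite <- Rmult_plus_distr_l, <- ln_mult by
    (try apply Rdiv_lt_0_compat; try apply Rmult_lt_0_compat; lra).
  f_equal. f_equal. field. lra.
Qed.

(* [ent_ln] is concave; this is its tangent plane along the ray [b = r a]. *)
Lemma ent_ln_le_tangent a b r : 0 <= a <= b -> 0 < r ->
  ent_ln a b <= a * ln r + b / r - a.
Proof.
  intros Hab Hr. destruct (Rlt_dec 0 a) as [Ha|Ha].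
  - assert (Hy : 0 < b / (a * r)) by (apply Rdiv_lt_0_compat; nra).
    rewrite (ent_ln_split a b r) by lra.
    pose proof (Rmult_le_compat_l a _ _ (Rlt_le _ _ Ha) (ln_le_sub1 _ Hy)).
    replace (a * (b / (a * r) - 1)) with (b / r - a) in H by (field; lra). lra.
  - unfold ent_ln. destruct (Rlt_dec 0 a); [lra|].
    replace a with 0 by lra.
    assert (0 <= b / r) by (apply Rmult_le_pos; [lra | left; apply Rinv_0_lt_compat; lra]).
    lra.
Qed.

Lemma ent_ln_lt_tangent a b r : 0 <= a <= b -> 0 < r -> b <> a * r ->
  ent_ln a b < a * ln r + b / r - a.
Proof.
  intros Hab Hr Hb. destruct (Rlt_dec 0 a) as [Ha|Ha].
  - assert (Hy : 0 < b / (a * r)) by (apply Rdiv_lt_0_compat; nra).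
    assert (Hy1 : b / (a * r) <> 1).
    { intro E. apply Hb. apply (Rmult_eq_reg_r (/ (a * r))).
      - rewrite Rinv_r by nra. exact E.
      - apply Rinv_neq_0_compat; nra. }
    rewrite (ent_ln_split a b r) by lra.
    pose proof (Rmult_lt_compat_l a _ _ Ha (ln_lt_sub1 _ Hy Hy1)).
    replace (a * (b / (a * r) - 1)) with (b / r - a) in H by (field; lra). lra.
  - unfold ent_ln. destruct (Rlt_dec 0 a); [lra|].
    replace a with 0 in * by lra. pose proof (Rdiv_lt_0_compat b r ltac:(lra) Hr). lra.
Qed.

(* The tangent planes along the ray through [(a1 + a2, b1 + b2)] add up to the value there. *)
Lemma ent_ln_tangent_sum a1 b1 a2 b2 : 0 < a1 + a2 <= b1 + b2 ->
  let r := (b1 + b2) / (a1 + a2) in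
  ent_ln (a1 + a2) (b1 + b2) = (a1 * ln r + b1 / r - a1) + (a2 * ln r + b2 / r - a2).
Proof.
  intros HA r. unfold ent_ln. destruct (Rlt_dec 0 (a1 + a2)); [|lra].
  unfold r. field. lra.
Qed.

Lemma ent_ln_add_le a1 b1 a2 b2 : 0 <= a1 <= b1 -> 0 <= a2 <= b2 ->
  ent_ln a1 b1 + ent_ln a2 b2 <= ent_ln (a1 + a2) (b1 + b2).
Proof.
  intros H1 H2. destruct (Rlt_dec 0 (a1 + a2)) as [HA|HA].
  - assert (Hr : 0 < (b1 + b2) / (a1 + a2)) by (apply Rdiv_lt_0_compat; lra).
    rewrite ent_ln_tangent_sum by lra.
    pose proof (ent_ln_le_tangent a1 b1 _ H1 Hr).
    pose proof (ent_ln_le_tangent a2 b2 _ H2 Hr). lra.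
  - replace a1 with 0 by lra. replace a2 with 0 by lra.
    unfold ent_ln. destruct (Rlt_dec 0 0), (Rlt_dec 0 (0 + 0)); lra.
Qed.

Lemma ent_ln_add_lt a1 b1 a2 b2 : 0 <= a1 <= b1 -> 0 <= a2 <= b2 ->
  a1 * b2 <> a2 * b1 ->
  ent_ln a1 b1 + ent_ln a2 b2 < ent_ln (a1 + a2) (b1 + b2).
Proof.
  intros H1 H2 Hne.
  assert (HA : 0 < a1 + a2).
  { destruct (Rlt_dec 0 (a1 + a2)) as [HA|HA]; [exact HA|].
    exfalso. apply Hne. replace a1 with 0 by lra. replace a2 with 0 by lra. ring. }
  set (r := (b1 + b2) / (a1 + a2)).
  assert (Hr : 0 < r) by (apply Rdiv_lt_0_compat; lra).
  rewrite ent_ln_tangent_sum by lra. fold r.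
  pose proof (ent_ln_le_tangent a1 b1 r H1 Hr).
  pose proof (ent_ln_le_tangent a2 b2 r H2 Hr).
  destruct (Req_dec b1 (a1 * r)) as [E1|E1].
  - assert (E2 : b2 <> a2 * r) by (intro E2; apply Hne; rewrite E1, E2; ring).
    pose proof (ent_ln_lt_tangent a2 b2 r H2 Hr E2). lra.
  - pose proof (ent_ln_lt_tangent a1 b1 r H1 Hr E1). lra.
Qed.

Definition cellEnt (u v : R) : R := entTerm u (u + v) + entTerm v (u + v).

Lemma condEnt_cells Q :
  condEntT_XY Q = sumb (fun x => sumb (fun y => cellEnt (Q false x y) (Q true x y))).
Proof. unfold condEntT_XY, cellEnt, margXY, sumb. ring. Qed.

Lemma cellEnt_add_le u1 v1 u2 v2 : 0 <= u1 -> 0 <= v1 -> 0 <= u2 -> 0 <= v2 ->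
  cellEnt u1 v1 + cellEnt u2 v2 <= cellEnt (u1 + u2) (v1 + v2).
Proof.
  intros. unfold cellEnt. rewrite !entTerm_ent_ln.
  replace (u1 + u2 + (v1 + v2)) with (u1 + v1 + (u2 + v2)) by ring.
  pose proof (ent_ln_add_le u1 (u1 + v1) u2 (u2 + v2) ltac:(lra) ltac:(lra)).
  pose proof (ent_ln_add_le v1 (u1 + v1) v2 (u2 + v2) ltac:(lra) ltac:(lra)).
  pose proof (Rinv_0_lt_compat _ ln2_pos). unfold Rdiv. nra.
Qed.

Lemma cellEnt_add_lt u1 v1 u2 v2 : 0 <= u1 -> 0 <= v1 -> 0 <= u2 -> 0 <= v2 ->
  u1 * v2 <> u2 * v1 -> cellEnt u1 v1 + cellEnt u2 v2 < cellEnt (u1 + u2) (v1 + v2).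
Proof.
  intros Hu1 Hv1 Hu2 Hv2 Hne. unfold cellEnt. rewrite !entTerm_ent_ln.
  replace (u1 + u2 + (v1 + v2)) with (u1 + v1 + (u2 + v2)) by ring.
  pose proof (ent_ln_add_lt u1 (u1 + v1) u2 (u2 + v2) ltac:(lra) ltac:(lra)
    ltac:(intro; apply Hne; nra)).
  pose proof (ent_ln_add_le v1 (u1 + v1) v2 (u2 + v2) ltac:(lra) ltac:(lra)).
  pose proof (Rinv_0_lt_compat _ ln2_pos). unfold Rdiv. nra.
Qed.

Lemma cellEnt_half u v : cellEnt (u / 2) (v / 2) = cellEnt u v / 2.
Proof.
  unfold cellEnt. rewrite !entTerm_ent_ln.
  replace (u / 2 + v / 2) with ((u + v) / 2) by field.
  rewrite !ent_ln_half. field. apply Rgt_not_eq, ln2_pos.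
Qed.

Lemma sumb_le f g : (forall b, f b <= g b) -> sumb f <= sumb g.
Proof. intros H. unfold sumb. pose proof (H false). pose proof (H true). lra. Qed.

Lemma sumb_lt f g : (forall b, f b <= g b) -> (exists b, f b < g b) -> sumb f < sumb g.
Proof.
  intros H [b Hb]. unfold sumb. pose proof (H false). pose proof (H true).
  destruct b; lra.
Qed.

Definition jmid (Q1 Q2 : jdist) : jdist := fun t x y => (Q1 t x y + Q2 t x y) / 2.

Lemma condEnt_jmid_gt Q1 Q2 :
  (forall t x y, 0 <= Q1 t x y) -> (forall t x y, 0 <= Q2 t x y) ->
  (exists x y, Q1 false x y * Q2 true x y <> Q2 false x y * Q1 true x y) ->
  condEntT_XY Q1 + condEntT_XY Q2 < 2 * condEntT_XY (jmid Q1 Q2).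
Proof.
  intros N1 N2 [x0 [y0 Hne]]. rewrite !condEnt_cells.
  replace (2 * _) with (sumb (fun x => sumb (fun y =>
    cellEnt (Q1 false x y + Q2 false x y) (Q1 true x y + Q2 true x y)))).
  2: { unfold sumb, jmid. rewrite !cellEnt_half. field. }
  replace (_ + _) with (sumb (fun x => sumb (fun y =>
    cellEnt (Q1 false x y) (Q1 true x y) + cellEnt (Q2 false x y) (Q2 true x y)))).
  2: { unfold sumb. ring. }
  apply sumb_lt.
  - intro x. apply sumb_le. intro y. apply cellEnt_add_le; auto.
  - exists x0. apply sumb_lt.
    + intro y. apply cellEnt_add_le; auto.
    + exists y0. apply cellEnt_add_lt; auto.
Qed.

Lemma DeltaP_jmid P Q1 Q2 : DeltaP P Q1 -> DeltaP P Q2 -> DeltaP P (jmid Q1 Q2).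
Proof.
  intros [[N1 S1] [X1 Y1]] [[N2 S2] [X2 Y2]].
  unfold DeltaP, is_dist, jmid, margTX, margTY, sumb in *.
  split; [split|split].
  - intros t x y. specialize (N1 t x y); specialize (N2 t x y); lra.
  - lra.
  - intros t x. specialize (X1 t x); specialize (X2 t x); lra.
  - intros t y. specialize (Y1 t y); specialize (Y2 t y); lra.
Qed.

(* Fixing both two-dimensional marginals leaves one free parameter per value of [T],
   so two points of [Delta_P] differ by a multiple of the checkerboard pattern. *)
Lemma DeltaP_sub P Q1 Q2 t x y : DeltaP P Q1 -> DeltaP P Q2 ->
  Q1 t x y - Q2 t x y =
  (if Bool.eqb x y then 1 else -1) * (Q1 t false false - Q2 t false false).
Proof.
  intros [_ [X1 Y1]] [_ [X2 Y2]].
  pose proof (X1 t false). pose proof (X1 t true). pose proof (Y1 t false).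
  pose proof (X2 t false). pose proof (X2 t true). pose proof (Y2 t false).
  unfold margTX, margTY, sumb in *. destruct x, y; simpl; lra.
Qed.

Lemma ratio_eq_of_proportional a0 a1 m0 m1 k0 k1 : 0 < m0 -> 0 < m1 ->
  ~ (k0 = 0 /\ k1 = 0) -> a0 * k1 = k0 * a1 -> m0 * k1 = k0 * m1 -> a0 / m0 = a1 / m1.
Proof.
  intros Hm0 Hm1 Hk Ha Hm.
  assert (Hk0 : k0 <> 0) by (intro E; apply Hk; split; [|rewrite E in Hm]; nra).
  assert (E : k0 * (a0 * m1 - a1 * m0) = 0).
  { replace (k0 * (a0 * m1 - a1 * m0))
      with (a0 * (k0 * m1 - m0 * k1) + m0 * (a0 * k1 - k0 * a1)) by ring.
    rewrite Ha, Hm. ring. }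
  destruct (Rmult_integral _ _ E) as [|E']; [contradiction|].
  apply (Rmult_eq_reg_r (m0 * m1)); [|nra].
  field_simplify; lra.
Qed.

Definition same_conditional_marginals (P : jdist) : Prop :=
  margTX P false false / margT P false = margTX P true false / margT P true /\
  margTY P false false / margT P false = margTY P true false / margT P true.

Lemma DeltaP_proportional_cells P Q1 Q2 : DeltaP P Q1 -> DeltaP P Q2 ->
  0 < margT P false -> 0 < margT P true ->
  (forall x y, Q1 false x y * Q2 true x y = Q2 false x y * Q1 true x y) ->
  Q1 = Q2 \/ same_conditional_marginals P.
Proof.
  intros D1 D2 HT0 HT1 Hprop.
  set (k := fun t => Q1 t false false - Q2 t false false).
  assert (key : forall x y, Q1 false x y * k true = k false * Q1 true x y).
  { intros x y. specialize (Hprop x y).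
    pose proof (DeltaP_sub P Q1 Q2 false x y D1 D2) as E0.
    pose proof (DeltaP_sub P Q1 Q2 true x y D1 D2) as E1.
    fold (k false) (k true) in E0, E1.
    destruct (Bool.eqb x y).
    - replace (Q2 false x y) with (Q1 false x y - k false) in Hprop by lra.
      replace (Q2 true x y) with (Q1 true x y - k true) in Hprop by lra. nra.
    - replace (Q2 false x y) with (Q1 false x y + k false) in Hprop by lra.
      replace (Q2 true x y) with (Q1 true x y + k true) in Hprop by lra. nra. }
  assert (Hk : (k false = 0 /\ k true = 0) \/ ~ (k false = 0 /\ k true = 0))
    by (destruct (Req_dec (k false) 0), (Req_dec (k true) 0); tauto).
  destruct Hk as [[K0 K1]|Hk].
  - left. extensionality t; extensionality x; extensionality y.
    pose proof (DeltaP_sub P Q1 Q2 t x y D1 D2) as E. fold (k t) in E.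
    destruct t; [rewrite K1 in E | rewrite K0 in E]; lra.
  - right. unfold same_conditional_marginals. destruct D1 as [_ [X1 Y1]].
    assert (kx : forall x, margTX P false x * k true = k false * margTX P true x).
    { intro x. rewrite <- !X1. unfold margTX, sumb.
      pose proof (key x false). pose proof (key x true). lra. }
    assert (ky : forall y, margTY P false y * k true = k false * margTY P true y).
    { intro y. rewrite <- !Y1. unfold margTY, sumb.
      pose proof (key false y). pose proof (key true y). lra. }
    assert (kT : margT P false * k true = k false * margT P true).
    { pose proof (kx false). pose proof (kx true). unfold margT, margTX, sumb in *. lra. }
    split; apply (ratio_eq_of_proportional _ _ _ _ (k false) (k true)); auto.
Qed.

Lemma argmax_unique P Q1 Q2 : 0 < margT P false -> 0 < margT P true ->
  is_argmax P Q1 -> is_argmax P Q2 ->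
  Q1 = Q2 \/ same_conditional_marginals P.
Proof.
  intros HT0 HT1 [D1 M1] [D2 M2].
  apply DeltaP_proportional_cells; auto.
  intros x y.
  destruct (Req_dec (Q1 false x y * Q2 true x y) (Q2 false x y * Q1 true x y)) as [E|E];
    [exact E | exfalso].
  pose proof (condEnt_jmid_gt Q1 Q2 (proj1 (proj1 D1)) (proj1 (proj1 D2))
    (ex_intro _ x (ex_intro _ y E))).
  pose proof (M1 _ (DeltaP_jmid P Q1 Q2 D1 D2)).
  pose proof (M2 _ (DeltaP_jmid P Q1 Q2 D1 D2)). lra.
Qed.

(* The point of [Delta_P] with [Q(t,0,0) = s_t]: the other three cells of each [T]-slice
   are forced by the marginals. *)
Definition coupling (P : jdist) (s0 s1 : R) : jdist := fun t x y =>
  let s := if t then s1 else s0 in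
  match x, y with
  | false, false => s
  | false, true => margTX P t false - s
  | true, false => margTY P t false - s
  | true, true => margTX P t true - margTY P t false + s
  end.

Lemma DeltaP_coupling P Q : DeltaP P Q ->
  Q = coupling P (Q false false false) (Q true false false).
Proof.
  intros [_ [HX HY]].
  extensionality t; extensionality x; extensionality y.
  pose proof (HX t false). pose proof (HX t true). pose proof (HY t false).
  unfold margTX, margTY, sumb in *.
  destruct t, x, y; unfold coupling, margTX, margTY, sumb; simpl; lra.
Qed.

Definition corner_lo (P : jdist) (t : bool) : R :=
  Rmax 0 (margTY P t false - margTX P t true).
Definition corner_hi (P : jdist) (t : bool) : R :=
  Rmin (margTX P t false) (margTY P t false).

Lemma DeltaP_corner_bounds P Q t : DeltaP P Q ->
  corner_lo P t <= Q t false false <= corner_hi P t.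
Proof.
  intros [[N _] [HX HY]].
  pose proof (HX t false). pose proof (HX t true). pose proof (HY t false).
  pose proof (N t false false). pose proof (N t false true).
  pose proof (N t true false). pose proof (N t true true).
  unfold corner_lo, corner_hi, margTX, margTY, sumb in *.
  split; [apply Rmax_lub | apply Rmin_glb]; lra.
Qed.

Lemma coupling_DeltaP P s0 s1 : is_dist P ->
  corner_lo P false <= s0 <= corner_hi P false ->
  corner_lo P true <= s1 <= corner_hi P true ->
  DeltaP P (coupling P s0 s1).
Proof.
  intros [_ HP] H0 H1. unfold corner_lo, corner_hi in *.
  pose proof (Rmax_l 0 (margTY P false false - margTX P false true)).
  pose proof (Rmax_r 0 (margTY P false false - margTX P false true)).
  pose proof (Rmin_l (margTX P false false) (margTY P false false)).
  pose proof (Rmin_r (margTX P false false) (margTY P false false)).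
  pose proof (Rmax_l 0 (margTY P true false - margTX P true true)).
  pose proof (Rmax_r 0 (margTY P true false - margTX P true true)).
  pose proof (Rmin_l (margTX P true false) (margTY P true false)).
  pose proof (Rmin_r (margTX P true false) (margTY P true false)).
  unfold coupling, DeltaP, is_dist, margTX, margTY, sumb in *.
  split; [split|split].
  - intros t x y; destruct t, x, y; simpl; lra.
  - simpl. lra.
  - intros t x; destruct t, x; simpl; lra.
  - intros t y; destruct t, y; simpl; lra.
Qed.

Definition xlnx (x : R) : R := if Rlt_dec 0 x then x * ln x else 0.

Lemma xlnx_small y : 0 < y < 1 -> Rabs (y * ln y) <= 2 * sqrt y.
Proof.
  intros [H0 H1].
  pose proof (sqrt_lt_R0 y H0) as Hz. set (z := sqrt y) in *.
  assert (Ez : z * z = y) by (apply sqrt_sqrt; lra).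
  assert (Lneg : ln y < 0) by (rewrite <- ln_1; apply ln_increasing; lra).
  assert (Lz : ln (/ z) <= / z - 1) by (apply ln_le_sub1, Rinv_0_lt_compat; lra).
  rewrite ln_Rinv in Lz by lra.
  rewrite Rabs_left by nra.
  rewrite <- Ez, ln_mult by lra.
  assert (z * z * (- ln z) <= z * z * (/ z - 1)) by (apply Rmult_le_compat_l; nra).
  replace (z * z * (/ z - 1)) with (z - z * z) in H by (field; lra).
  nra.
Qed.

Lemma xlnx_continuous_0 : continuity_pt xlnx 0.
Proof.
  intros eps Heps. exists (Rmin 1 (eps / 2 * (eps / 2))). split.
  - apply Rmin_glb_lt; [lra | nra].
  - intros y [_ Hy]. simpl in *. unfold R_dist in *. rewrite Rminus_0_r in *.
    unfold xlnx. destruct (Rlt_dec 0 0); [lra|]. rewrite Rminus_0_r.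
    destruct (Rlt_dec 0 y) as [Hy0|Hy0]; [|rewrite Rabs_R0; lra].
    rewrite Rabs_right in Hy by lra.
    pose proof (Rmin_l 1 (eps / 2 * (eps / 2))).
    pose proof (Rmin_r 1 (eps / 2 * (eps / 2))).
    pose proof (xlnx_small y ltac:(lra)).
    assert (sqrt y < eps / 2).
    { rewrite <- (sqrt_square (eps / 2)) by lra. apply sqrt_lt_1; lra. }
    lra.
Qed.

Lemma xlnx_continuous x : continuity_pt xlnx x.
Proof.
  destruct (Rtotal_order x 0) as [Hn|[Hz|Hp]].
  - apply continuity_pt_locally_ext with (f := fun _ => 0) (a := - x); [lra| |].
    + intros y Hy. unfold Rdist in Hy. unfold xlnx. destruct (Rlt_dec 0 y); [|reflexivity].
      pose proof (Rle_abs (y - x)). lra.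
    + apply continuity_pt_const. intros a b; reflexivity.
  - subst x. exact xlnx_continuous_0.
  - apply continuity_pt_locally_ext with (f := fun y => y * ln y) (a := x); [lra| |].
    + intros y Hy. unfold Rdist in Hy. unfold xlnx. destruct (Rlt_dec 0 y); [reflexivity|].
      pose proof (Rle_abs (- (y - x))). rewrite Rabs_Ropp in H. lra.
    + apply (continuity_pt_mult (fun y => y) ln).
      * apply derivable_continuous_pt, derivable_pt_id.
      * apply derivable_continuous_pt. exists (/ x). apply derivable_pt_lim_ln; lra.
Qed.

Lemma cellEnt_xlnx u v : 0 <= u -> 0 <= v ->
  cellEnt u v = (xlnx (u + v) - xlnx u - xlnx v) / ln 2.
Proof.
  intros Hu Hv. pose proof ln2_pos. unfold cellEnt, entTerm, xlnx.
  destruct (Rlt_dec 0 u), (Rlt_dec 0 v), (Rlt_dec 0 (u + v)); try lra.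
  - rewrite !ln_div by lra. field. lra.
  - replace v with 0 by lra. rewrite !Rplus_0_r, ln_div by lra. field. lra.
  - replace u with 0 by lra. rewrite !Rplus_0_l, ln_div by lra. field. lra.
Qed.

(* [condEntT_XY] of [coupling P s0 s1] with [0 log 0 = 0] made continuous through [xlnx]. *)
Definition condEnt_param (P : jdist) (s : R * R) : R :=
  let Q := coupling P (fst s) (snd s) in
  sumb (fun x => sumb (fun y =>
    (xlnx (Q false x y + Q true x y) - xlnx (Q false x y) - xlnx (Q true x y)) / ln 2)).

Lemma condEnt_coupling P s0 s1 : DeltaP P (coupling P s0 s1) ->
  condEntT_XY (coupling P s0 s1) = condEnt_param P (s0, s1).
Proof.
  intros [[N _] _]. rewrite condEnt_cells. unfold condEnt_param, sumb. simpl fst; simpl snd.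
  rewrite !cellEnt_xlnx by apply N. reflexivity.
Qed.

(* Imported only now: mathcomp-analysis rebinds [ln]. *)
From mathcomp Require Import all_boot all_order all_algebra.
From mathcomp Require Import all_classical all_reals all_analysis.
From mathcomp Require Import Rstruct Rstruct_topology.
Import Order.TTheory GRing.Theory Num.Theory.
Open Scope R_scope.

Lemma EVT_max_rectangle {f : R * R -> R} {a0 b0 a1 b1 : R} :
  a0 <= b0 -> a1 <= b1 -> continuous f ->
  exists c0 c1, (a0 <= c0 <= b0 /\ a1 <= c1 <= b1) /\
    forall s0 s1, a0 <= s0 <= b0 -> a1 <= s1 <= b1 -> f (s0, s1) <= f (c0, c1).
Proof.
move=> h0 h1 cf.
set A := (`[a0, b0]%classic `*` `[a1, b1]%classic)%classic.
have inA s0 s1 : a0 <= s0 <= b0 -> a1 <= s1 <= b1 -> A (s0, s1).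
  by move=> ? ?; split; rewrite /= in_itv /=; apply/andP; split; apply/RleP; lra.
have cA : compact A by apply: compact_setX; apply: segment_compact.
have A0 : (A !=set0)%classic by exists (a0, a1); apply: inA; lra.
have [[c0 c1] cin cmax] := compact_EVT_max A0 cA (continuous_subspaceT cf).
exists c0, c1; split.
  move: cin; rewrite inE /A /= => -[]; rewrite /= !in_itv /=.
  by move=> /andP[/RleP ? /RleP ?] /andP[/RleP ? /RleP ?]; lra.
by move=> s0 s1 hs0 hs1; apply/RleP; apply: (cmax (s0, s1)); rewrite inE; apply: inA.
Qed.

Lemma condEnt_param_continuous P : continuous (condEnt_param P).
Proof.
have cst (k : R) : continuous (fun _ : R * R => k) by move=> ?; apply: cst_continuous.
have cD (f g : R * R -> R) : continuous f -> continuous g -> continuous (fun p => f p + g p).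
  by move=> cf cg p; exact: (@continuousD R R^o _ f g p (cf p) (cg p)).
have cN (f : R * R -> R) : continuous f -> continuous (fun p => - f p).
  by move=> cf p; exact: (@continuousN R R^o _ f p (cf p)).
have cdiv (f : R * R -> R) (k : R) : continuous f -> continuous (fun p => f p / k).
  by move=> cf p; apply: (@continuousM R _ f (fun _ => / k) p (cf p) (cst _ p)).
have cxlnx (f : R * R -> R) : continuous f -> continuous (fun p => xlnx (f p)).
  move=> cf p; apply: (continuous_comp (cf p)).
  by apply/continuity_pt_cvg; apply: xlnx_continuous.
have c1 : continuous (fun p : R * R => p.1) by move=> ?; apply: cvg_fst.
have c2 : continuous (fun p : R * R => p.2) by move=> ?; apply: cvg_snd.
rewrite /condEnt_param /coupling /sumb /=.
by repeat first [apply: (cD) | apply: (cN) | apply: (cdiv) | apply: (cxlnx)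
                | apply: (c1) | apply: (c2) | apply: (cst)].
Qed.

Lemma argmax_exists P : is_dist P -> exists Q, is_argmax P Q.
Proof.
move=> HP; have DP : DeltaP P P by split=> //; split=> *.
have lohi t : corner_lo P t <= corner_hi P t.
  by have [? ?] := DeltaP_corner_bounds P P t DP; lra.
have [s0 [s1 [[hs0 hs1] smax]]] :=
  EVT_max_rectangle (lohi false) (lohi true) (condEnt_param_continuous P).
have DQ := coupling_DeltaP P s0 s1 HP hs0 hs1.
exists (coupling P s0 s1); split=> // Q' DQ'.
rewrite (DeltaP_coupling P Q' DQ') !condEnt_coupling -?DeltaP_coupling //.
by apply: smax; apply: DeltaP_corner_bounds.
Qed.

Theorem mainTheorem17 (P : jdist) (HP : is_dist P)
  (HT0 : 0 < margT P false) (HT1 : 0 < margT P true) :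
  let b := margTX P false false / margT P false in
  let c := margTX P true false / margT P true in
  let d := margTY P false false / margT P false in
  let e := margTY P true false / margT P true in
  ~ (b = c /\ d = e) ->
  exists! Q : jdist, is_argmax P Q.
Proof.
move=> b c d e Hbcde.
have [Q HQ] := argmax_exists P HP.
exists Q; split=> // Q' HQ'.
by case: (argmax_unique P Q Q' HT0 HT1 HQ HQ') => // /Hbcde.
Qed.
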